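(* The class of coherent compact spaces is not $\omega$-projective: there is a projective system of coherent compact topological spaces, indexed by a directed preordered set with a countable cofinal subset, whose projective limit in the category of topological spaces is not coherent (hence not a coherent compact space).
   Context: A projective system of topological spaces consists of a directed preordered set $(I,\sqsubseteq)$, spaces $X_i$ and continuous maps $p_{ij}\colon X_j\to X_i$ for $i\sqsubseteq j$ with $p_{ii}=\mathrm{id}$ and $p_{ij}\circ p_{jk}=p_{ik}$; its projective limit is its limit in the category of topological spaces. A space is coherent if the intersection of any two compact saturated subsets is compact (saturated = upward closed in the specialization preorder; compactness assumes no separation axiom). *)

From mathcomp Require Import all_boot all_order.
From mathcomp Require Import all_classical topology.
Set Implicit Arguments. Unset Strict Implicit. Unset Printing Implicit Defensive.
Local Open Scope classical_set_scope.

(* Specialization preorder: x <= y iff x lies in the closure of {y}.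
   Open sets are upward closed for this preorder. *)
Definition specialization_le (T : topologicalType) (x y : T) : Prop :=
  closure [set y] x.

Definition saturated (T : topologicalType) (A : set T) : Prop :=
  forall x y : T, A x -> specialization_le x y -> A y.

Definition coherent (T : topologicalType) : Prop :=
  forall A B : set T, compact A -> saturated A -> compact B -> saturated B ->
    compact (A `&` B).

Definition directed_preorder (I : Type) (le : I -> I -> Prop) : Prop :=
  (forall i, le i i) /\ (forall i j k, le i j -> le j k -> le i k) /\
  (exists i : I, True) /\ (forall i j, exists k, le i k /\ le j k).

Definition has_countable_cofinal (I : Type) (le : I -> I -> Prop) : Prop :=
  exists C : set I, countable C /\ forall i, exists2 c, C c & le i c.

Definition projective_system (I : Type) (le : I -> I -> Prop)
  (X : I -> topologicalType) (p : forall i j, le i j -> X j -> X i) : Prop :=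
  (forall i j (h : le i j), continuous (p i j h)) /\
  (forall i (h : le i i), p i i h = id) /\
  (forall i j k (hij : le i j) (hjk : le j k) (hik : le i k),
      p i j hij \o p j k hjk = p i k hik).

Definition is_cone (I : Type) (le : I -> I -> Prop)
  (X : I -> topologicalType) (p : forall i j, le i j -> X j -> X i)
  (Y : topologicalType) (q : forall i, Y -> X i) : Prop :=
  (forall i, continuous (q i)) /\
  (forall i j (h : le i j), p i j h \o q j = q i).

Definition is_projective_limit (I : Type) (le : I -> I -> Prop)
  (X : I -> topologicalType) (p : forall i j, le i j -> X j -> X i)
  (L : topologicalType) (pi : forall i, L -> X i) : Prop :=
  is_cone p pi /\
  forall (Y : topologicalType) (q : forall i, Y -> X i), is_cone p q ->
    exists! u : Y -> L, continuous u /\ forall i, pi i \o u = q i.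

From HB Require Import structures.
From mathcomp Require Import all_boot all_order.
From mathcomp Require Import all_classical topology.
Local Open Scope classical_set_scope.

(** All spaces live on [nat + bool]: a sequence [inl k] and two ends
    [inr true], [inr false].  In the stage [n], an open set meeting
    [{inl k | n <= k} ∪ {ends}] contains [{inl k | n <= k}], so every subset of
    a stage is compact.  The limit along the identity maps carries the
    supremum of these topologies: each [inl k] is isolated and the sequence
    converges to both ends.  The complements of the two ends are open and
    compact, but their intersection, the sequence itself, is infinite and
    discrete. *)

Lemma open_saturated {T : topologicalType} {A : set T} : open A -> saturated A.
Proof.
move=> oA x y Ax xy.
by have [_ [-> //]] := xy A (open_nbhs_nbhs (conj oA Ax)).
Qed.

Lemma compact_cofinite_nbhs {T : topologicalType} {A : set T} (x : T) :
  A x -> (forall W, nbhs x W -> finite_set (A `\` W)) -> compact A.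
Proof.
move=> Ax finAW F PF FA.
have [Fx|nFx] := pselect (cluster F x); first by exists x.
have [U [W [FU Wx UW]]] : exists U W, [/\ F U, nbhs x W & ~ (U `&` W !=set0)].
  apply: contra_notP nFx => nUW U W FU Wx; apply: contrapT => UW.
  by apply: nUW; exists U, W.
have FAU : F (A `&` U) by apply: filterI.
have finAU : finite_set (A `&` U).
  apply: sub_finite_set (finAW W Wx) => y [Ay Uy]; split => // Wy.
  by apply: UW; exists y.
have [y [[Ay _] Fy]] := finite_compact finAU PF FAU.
by exists y.
Qed.

Lemma coherent_all_compact (T : topologicalType) :
  (forall A : set T, compact A) -> coherent T.
Proof. by move=> cpt A B *; exact: cpt. Qed.

Lemma directed_leq : directed_preorder (fun i j : nat => (i <= j)%N).
Proof.
split=> //; split; first by move=> i j k; exact: leq_trans.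
split; first by exists 0%N.
by move=> i j; exists (maxn i j); rewrite leq_maxl leq_maxr.
Qed.

Lemma countable_cofinal_leq : has_countable_cofinal (fun i j : nat => (i <= j)%N).
Proof. by exists setT; split; [exact: countableP|move=> i; exists i]. Qed.

Definition seq_tail (n : nat) : set (nat + bool) := inl @` [set k | (n <= k)%N].

Lemma finite_seq_tailC (n : nat) : finite_set (~` seq_tail n).
Proof.
apply: (@sub_finite_set _ _ (inl @` `I_n `|` range inr)).
  case=> [k|b] /= tail_k; last by right; exists b.
  by left; exists k => //=; rewrite ltnNge; apply/negP => nk; apply: tail_k; exists k.
by rewrite finite_setU; split; apply: finite_image; [exact: finite_II|exact: finite_finset].
Qed.

Definition stage (n : nat) : Type := (nat + bool)%type.

Definition stage_open (n : nat) (U : set (nat + bool)) : Prop :=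
  U `&` (seq_tail n `|` range inr) !=set0 -> seq_tail n `<=` U.

Lemma stage_openT (n : nat) : stage_open n setT. Proof. by []. Qed.

Lemma stage_openI (n : nat) : setI_closed (stage_open n).
Proof.
move=> A B oA oB [x [[Ax Bx] far_x]] y tail_y.
by split; [apply: oA|apply: oB] => //; exists x.
Qed.

Lemma stage_open_bigU (n : nat) (I : Type) (f : I -> set (nat + bool)) :
  (forall i, stage_open n (f i)) -> stage_open n (\bigcup_i f i).
Proof.
move=> of_ [x [[i _ fx] far_x]] y tail_y.
by exists i => //; apply: (of_ i) => //; exists x.
Qed.

HB.instance Definition _ (n : nat) := Choice.on (stage n).
HB.instance Definition _ (n : nat) := isOpenTopological.Build (stage n)
  (@stage_openT n) (@stage_openI n) (@stage_open_bigU n).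

Lemma open_stageE (n : nat) (A : set (stage n)) : open A = stage_open n A.
Proof. by []. Qed.

Lemma stage_compact (n : nat) (A : set (stage n)) : compact A.
Proof.
have [[x [Ax far_x]]|nA] := pselect (A `&` (seq_tail n `|` range inr) !=set0).
  apply: (compact_cofinite_nbhs x Ax) => W [V [oV Vx VW]].
  apply: sub_finite_set (finite_seq_tailC n) => y [_ nWy] tail_y.
  by apply/nWy/VW/oV => //; exists x.
apply/finite_compact/(sub_finite_set _ (finite_seq_tailC n)) => y Ay tail_y.
by apply: nA; exists y; split => //; left.
Qed.

Definition stage_map (i j : nat) (_ : (i <= j)%N) (x : stage j) : stage i := x.

Lemma continuous_stage_map (i j : nat) (ij : (i <= j)%N) :
  continuous (stage_map i j ij).
Proof.
have tail_ji : seq_tail j `<=` seq_tail i.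
  by move=> _ [k jk <-]; exists k => //; exact: leq_trans jk.
apply/continuousP => A; rewrite !open_stageE => oA [x [Ax far_x]].
apply: (subset_trans tail_ji (oA _)); exists x; split => //.
by case: far_x => [/tail_ji|]; [left|right].
Qed.

Lemma stage_system : projective_system stage_map.
Proof. by split; first exact: continuous_stage_map. Qed.

Definition nat_two_ends : Type := (nat + bool)%type.

Definition ends_open (U : set (nat + bool)) : Prop :=
  forall b, U (inr b) -> \forall k \near \oo, U (inl k).

Lemma ends_openT : ends_open setT. Proof. by move=> b _; apply: nearW. Qed.

Lemma ends_openI : setI_closed ends_open.
Proof. by move=> A B oA oB b [Ab Bb]; exact: filterI (oA b Ab) (oB b Bb). Qed.

Lemma ends_open_bigU (I : Type) (f : I -> set (nat + bool)) :
  (forall i, ends_open (f i)) -> ends_open (\bigcup_i f i).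
Proof. by move=> of_ b [i _ fib]; apply: filterS (of_ i b fib) => k; exists i. Qed.

HB.instance Definition _ := Choice.on nat_two_ends.
HB.instance Definition _ :=
  isOpenTopological.Build nat_two_ends ends_openT ends_openI ends_open_bigU.

Lemma open_two_endsE (A : set nat_two_ends) : open A = ends_open A.
Proof. by []. Qed.

Definition stage_proj (n : nat) (x : nat_two_ends) : stage n := x.

Lemma continuous_stage_proj (n : nat) : continuous (stage_proj n).
Proof.
apply/continuousP => A; rewrite open_stageE open_two_endsE => oA b Ab.
exists n => // k nk; apply: oA; last by exists k.
by exists (inr b); split => //; right; exists b.
Qed.

Lemma ends_open_local {A : set nat_two_ends} {x : nat_two_ends} : open A -> A x ->
  exists n (V : set (stage n)), [/\ open V, V x & V `<=` A].
Proof.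
rewrite open_two_endsE => oA; case: x => [k|b] Ax.
  exists k.+1, [set inl k]; split; [|by []|by move=> _ ->].
  rewrite open_stageE => -[_ [-> [[j kSj [jk]]|[? _ //]]]].
  by move: kSj; rewrite jk /= ltnn.
have [m _ Am] := oA b Ax.
exists m, (seq_tail m `|` [set inr b]).
split; [by rewrite open_stageE => _ y; left|by right|].
by move=> _ [[k mk <-]|->]; [exact: Am|].
Qed.

Lemma continuous_into_two_ends (Y : topologicalType) (u : Y -> nat_two_ends) :
  (forall n, continuous (stage_proj n \o u)) -> continuous u.
Proof.
move=> uc; apply/continuousP => A oA; rewrite openE => y Ay.
have [n [V [oV Vy VA]]] := ends_open_local oA Ay.
apply: (@filterS _ _ _ ((stage_proj n \o u) @^-1` V)); first by move=> z /VA.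
by apply: open_nbhs_nbhs; split => //; exact: (continuousP _).1 (uc n) _ oV.
Qed.

Lemma stage_limit : is_projective_limit stage_map stage_proj.
Proof.
split; first by split; first exact: continuous_stage_proj.
move=> Y q [qc qp]; have qE n : q n = q 0%N := qp 0%N n (leq0n n).
exists (q 0%N); split; last by move=> u [_ uq]; rewrite -(uq 0%N).
split=> [|n]; last by rewrite (qE n).
by apply: continuous_into_two_ends => n; have := qc n; rewrite qE.
Qed.

Definition avoid (b : bool) : set nat_two_ends := [set x | x <> inr b].

Lemma open_avoid (b : bool) : open (avoid b).
Proof. by rewrite open_two_endsE => b' _; apply: nearW. Qed.

Lemma compact_avoid (b : bool) : compact (avoid b).
Proof.
apply: (compact_cofinite_nbhs (inr (~~ b) : nat_two_ends)); first by case: b.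
move=> W [V [oV Vx VW]]; have [m _ Vm] := oV _ Vx.
apply: sub_finite_set (finite_seq_tailC m) => y [_ nWy] [k mk ky].
by apply: nWy; rewrite -ky; exact/VW/Vm.
Qed.

Lemma not_compact_range_inl : ~ compact (range inl : set nat_two_ends).
Proof.
move=> cpt.
have [_ [[k _ <-] clk]] :
    range inl `&` cluster (inl @ \oo : set_system nat_two_ends) !=set0.
  by apply: cpt; exists 0%N => // k _; exists k.
have isolated_k : nbhs (inl k : nat_two_ends) [set inl k].
  by exists [set inl k]; split.
have eventually_gt_k :
    (inl @ \oo : set_system nat_two_ends) (inl @` [set j | (k < j)%N]).
  by apply: filterS (nbhs_infty_gt k) => j kj; exists j.
have [_ [[j kj <-] [jk]]] := clk _ _ eventually_gt_k isolated_k.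
by rewrite jk /= ltnn in kj.
Qed.

Lemma not_coherent_two_ends : ~ coherent nat_two_ends.
Proof.
move=> coh; apply: not_compact_range_inl.
have -> : range inl = avoid true `&` avoid false.
  apply/seteqP; split => [_ [k _ <-] //|[k _|[] []] //]; by exists k.
have saturated_avoid b : saturated (avoid b) := open_saturated (open_avoid b).
by apply: coh; exact: compact_avoid || exact: saturated_avoid.
Qed.

Theorem corollary4p7 :
  exists (I : Type) (le : I -> I -> Prop),
    directed_preorder le /\ has_countable_cofinal le /\
    exists (X : I -> topologicalType) (p : forall i j, le i j -> X j -> X i),
      projective_system p /\
      (forall i, compact [set: X i] /\ coherent (X i)) /\
      exists (L : topologicalType) (pi : forall i, L -> X i),
        is_projective_limit p pi /\ ~ coherent L.
Proof.
exists nat, (fun i j => (i <= j)%N).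
split; first exact: directed_leq.
split; first exact: countable_cofinal_leq.
exists _, stage_map; split; first exact: stage_system.
split; first by move=> n; split; [|apply: coherent_all_compact]; exact: stage_compact.
by exists nat_two_ends, stage_proj; split; [exact: stage_limit|exact: not_coherent_two_ends].
Qed.
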